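(* Let $g:(1/\sqrt2,1)\to\mathbb{R}$, $g(q)=8(2\mathrm{E}(q)-\mathrm{K}(q))^2(2q^2-1)$. Then for $q\in(1/\sqrt2,1)$, $$g'(q)=\frac{16}{q(1-q^2)}\big(2\mathrm{E}(q)-\mathrm{K}(q)\big)f(q).$$ In addition, $g$ has exactly two local extrema, at $\hat q\approx0.79257$ and $q_*\approx0.90891$: $g(\hat q)=:\hat\lambda\approx0.70107$ is the unique local maximum, $g(q_* )=0$ is a local minimum, and $g$ is strictly monotone on each of $(1/\sqrt2,\hat q]$, $[\hat q,q_*]$ and $[q_*,1)$.
   Context: For $q\in[0,1)$, $\mathrm{K}(q)=\int_0^{\pi/2}(1-q^2\sin^2\theta)^{-1/2}\,d\theta$ and $\mathrm{E}(q)=\int_0^{\pi/2}(1-q^2\sin^2\theta)^{1/2}\,d\theta$. The function $q\mapsto2\mathrm{E}(q)-\mathrm{K}(q)$ is strictly decreasing on $[0,1)$ and $q_*\in(0,1)$ is its unique zero. $f(q)=(4q^4-5q^2+1)\mathrm{K}(q)+(-8q^4+8q^2-1)\mathrm{E}(q)$ on $[1/\sqrt2,1)$, and $\hat q$ denotes the unique zero of $f$ in $[1/\sqrt2,1)$, which lies in $(1/\sqrt2,q_* )$, with $f>0$ on $[1/\sqrt2,\hat q)$ and $f<0$ on $(\hat q,1)$. *)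

From Stdlib Require Import Reals.
From Coquelicot Require Import Coquelicot.
Open Scope R_scope.

Definition ellK (q : R) : R :=
  RInt (fun t => / sqrt (1 - q ^ 2 * (sin t) ^ 2)) 0 (PI / 2).
Definition ellE (q : R) : R :=
  RInt (fun t => sqrt (1 - q ^ 2 * (sin t) ^ 2)) 0 (PI / 2).

Definition fK (q : R) : R :=
  (4 * q ^ 4 - 5 * q ^ 2 + 1) * ellK q + (- 8 * q ^ 4 + 8 * q ^ 2 - 1) * ellE q.

Definition gK (q : R) : R :=
  8 * (2 * ellE q - ellK q) ^ 2 * (2 * q ^ 2 - 1).

Definition domg (x : R) : Prop := / sqrt 2 < x < 1.

Definition is_local_max (D : R -> Prop) (h : R -> R) (x : R) : Prop :=
  D x /\ exists d : R, 0 < d /\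
    forall y, D y -> Rabs (y - x) < d -> h y <= h x.
Definition is_local_min (D : R -> Prop) (h : R -> R) (x : R) : Prop :=
  D x /\ exists d : R, 0 < d /\
    forall y, D y -> Rabs (y - x) < d -> h x <= h y.

Definition strictly_monotone_on (I : R -> Prop) (h : R -> R) : Prop :=
  (forall x y, I x -> I y -> x < y -> h x < h y) \/
  (forall x y, I x -> I y -> x < y -> h y < h x).

From Stdlib Require Import Reals Lra Psatz.
From Coquelicot Require Import Coquelicot.
Open Scope R_scope.

(* Differentiating under the integral sign gives E' = (E - K) / q directly. For K the
   derivative of the integrand, q sin^2 t / Delta^(3/2) with Delta = 1 - q^2 sin^2 t, is a
   combination of sqrt Delta, 1 / sqrt Delta and the t-derivative of
   sin t cos t / sqrt Delta, which vanishes at both ends of [0, pi/2]; hence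
   K' = (E - (1 - q^2) K) / (q (1 - q^2)).  Substituting into g gives
   g' = 16 (2E - K) f / (q (1 - q^2)), whose sign is that of (2E - K) f: positive on
   (1/sqrt 2, qhat), negative on (qhat, q_star), positive on (q_star, 1).  A
   differentiable function that rises, falls and rises again has exactly two local
   extrema, a maximum and a minimum at the turning points. *)

Definition ell_delta (q t : R) : R := 1 - q ^ 2 * sin t ^ 2.

Lemma ell_delta_pos q t : -1 < q < 1 -> 0 < ell_delta q t.
Proof.
  intros Hq. unfold ell_delta. pose proof (SIN_bound t).
  assert (sin t ^ 2 <= 1) by nra. assert (q ^ 2 < 1) by nra. nra.
Qed.

Lemma sqrt_ell_delta_pos q t : -1 < q < 1 -> 0 < sqrt (ell_delta q t).
Proof. intros Hq. apply sqrt_lt_R0, ell_delta_pos, Hq. Qed.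

(* [auto_derive] unfolds [ell_delta u t] into this normal form. *)
Ltac fold_ell_delta u t :=
  replace (1 + - (u * (u * 1) * (sin t * (sin t * 1)))) with (ell_delta u t)
    by (unfold ell_delta; ring).

Lemma is_derive_sqrt_ell_delta u t : -1 < u < 1 ->
  is_derive (fun z => sqrt (ell_delta z t)) u
    (- (u * sin t ^ 2) / sqrt (ell_delta u t)).
Proof.
  intros Hu. pose proof (ell_delta_pos u t Hu). pose proof (sqrt_ell_delta_pos u t Hu).
  unfold ell_delta at 1. auto_derive; fold_ell_delta u t; [easy|].
  field. lra.
Qed.

Lemma is_derive_inv_sqrt_ell_delta u t : -1 < u < 1 ->
  is_derive (fun z => / sqrt (ell_delta z t)) u
    (u * sin t ^ 2 / (ell_delta u t * sqrt (ell_delta u t))).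
Proof.
  intros Hu. pose proof (ell_delta_pos u t Hu). pose proof (sqrt_ell_delta_pos u t Hu).
  unfold ell_delta at 1. auto_derive; fold_ell_delta u t.
  - repeat split; lra.
  - rewrite sqrt_sqrt by lra. field. lra.
Qed.

Lemma continuity_2d_pt_sqrt f x y : continuity_2d_pt f x y -> 0 < f x y ->
  continuity_2d_pt (fun u v => sqrt (f u v)) x y.
Proof.
  intros Hf Hpos. apply continuity_1d_2d_pt_comp; [|exact Hf].
  apply continuity_pt_sqrt. lra.
Qed.

Lemma continuity_2d_pt_pow2 f x y : continuity_2d_pt f x y ->
  continuity_2d_pt (fun u v => f u v ^ 2) x y.
Proof.
  intros Hf. apply continuity_2d_pt_ext with (fun u v => f u v * f u v).
  - intros; ring.
  - now apply continuity_2d_pt_mult.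
Qed.

Lemma continuity_2d_pt_sin_snd x y : continuity_2d_pt (fun _ v => sin v) x y.
Proof.
  apply (continuity_1d_2d_pt_comp sin (fun _ v => v)).
  - apply continuity_sin.
  - apply continuity_2d_pt_id2.
Qed.

Lemma continuity_2d_pt_ell_delta x y : continuity_2d_pt ell_delta x y.
Proof.
  apply continuity_2d_pt_minus; [apply continuity_2d_pt_const|].
  apply continuity_2d_pt_mult; apply continuity_2d_pt_pow2.
  - apply continuity_2d_pt_id1.
  - apply continuity_2d_pt_sin_snd.
Qed.

Lemma continuity_2d_pt_id1_mul_sin2 x y : continuity_2d_pt (fun u v => u * sin v ^ 2) x y.
Proof.
  apply continuity_2d_pt_mult.
  - apply continuity_2d_pt_id1.
  - apply continuity_2d_pt_pow2, continuity_2d_pt_sin_snd.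
Qed.

Lemma continuity_2d_pt_sqrt_ell_delta x y : -1 < x < 1 ->
  continuity_2d_pt (fun u v => sqrt (ell_delta u v)) x y.
Proof.
  intros Hx. apply continuity_2d_pt_sqrt.
  - apply continuity_2d_pt_ell_delta.
  - now apply ell_delta_pos.
Qed.

Lemma continuity_2d_pt_derive_sqrt_ell_delta x y : -1 < x < 1 ->
  continuity_2d_pt (fun u v => - (u * sin v ^ 2) / sqrt (ell_delta u v)) x y.
Proof.
  intros Hx. apply continuity_2d_pt_mult.
  - apply continuity_2d_pt_opp, continuity_2d_pt_id1_mul_sin2.
  - apply continuity_2d_pt_inv.
    + now apply continuity_2d_pt_sqrt_ell_delta.
    + apply Rgt_not_eq. now apply sqrt_ell_delta_pos.
Qed.

Lemma continuity_2d_pt_derive_inv_sqrt_ell_delta x y : -1 < x < 1 ->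
  continuity_2d_pt
    (fun u v => u * sin v ^ 2 / (ell_delta u v * sqrt (ell_delta u v))) x y.
Proof.
  intros Hx. apply continuity_2d_pt_mult; [apply continuity_2d_pt_id1_mul_sin2|].
  apply continuity_2d_pt_inv.
  - apply continuity_2d_pt_mult; [apply continuity_2d_pt_ell_delta|].
    now apply continuity_2d_pt_sqrt_ell_delta.
  - apply Rgt_not_eq, Rmult_lt_0_compat.
    + now apply ell_delta_pos.
    + now apply sqrt_ell_delta_pos.
Qed.

Lemma ex_RInt_sqrt_ell_delta q a b : -1 < q < 1 ->
  ex_RInt (fun t => sqrt (ell_delta q t)) a b.
Proof.
  intros Hq. apply (@ex_RInt_continuous R_CompleteNormedModule). intros t _.
  apply (@ex_derive_continuous R_AbsRing R_NormedModule).
  pose proof (ell_delta_pos q t Hq). unfold ell_delta at 1.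
  auto_derive. fold_ell_delta q t. easy.
Qed.

Lemma ex_RInt_inv_sqrt_ell_delta q a b : -1 < q < 1 ->
  ex_RInt (fun t => / sqrt (ell_delta q t)) a b.
Proof.
  intros Hq. apply (@ex_RInt_continuous R_CompleteNormedModule). intros t _.
  apply (@ex_derive_continuous R_AbsRing R_NormedModule).
  pose proof (ell_delta_pos q t Hq). pose proof (sqrt_ell_delta_pos q t Hq).
  unfold ell_delta at 1. auto_derive. fold_ell_delta q t. repeat split; lra.
Qed.

Lemma is_RInt_ellE q : -1 < q < 1 ->
  is_RInt (fun t => sqrt (ell_delta q t)) 0 (PI / 2) (ellE q).
Proof.
  intros Hq. apply (RInt_correct (V := R_CompleteNormedModule)).
  now apply ex_RInt_sqrt_ell_delta.
Qed.

Lemma is_RInt_ellK q : -1 < q < 1 ->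
  is_RInt (fun t => / sqrt (ell_delta q t)) 0 (PI / 2) (ellK q).
Proof.
  intros Hq. apply (RInt_correct (V := R_CompleteNormedModule)).
  now apply ex_RInt_inv_sqrt_ell_delta.
Qed.

Lemma is_RInt_lincomb (f g : R -> R) (a b k l If Ig : R) :
  is_RInt f a b If -> is_RInt g a b Ig ->
  is_RInt (fun t => k * f t + l * g t) a b (k * If + l * Ig).
Proof.
  intros Hf Hg.
  apply (is_RInt_plus (V := R_NormedModule) (fun t => k * f t) (fun t => l * g t)).
  - exact (is_RInt_scal (V := R_NormedModule) f a b k If Hf).
  - exact (is_RInt_scal (V := R_NormedModule) g a b l Ig Hg).
Qed.

Lemma is_derive_RInt_param_interval (F dF : R -> R -> R) (lo hi a b q v : R) :
  lo < q < hi ->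
  (forall u t, lo < u < hi -> is_derive (fun z => F z t) u (dF u t)) ->
  (forall u t, lo < u < hi -> continuity_2d_pt dF u t) ->
  (forall u, lo < u < hi -> ex_RInt (F u) a b) ->
  is_RInt (dF q) a b v ->
  is_derive (fun u => RInt (F u) a b) q v.
Proof.
  intros Hq Hd Hc Hi Hv.
  assert (Hnear : locally q (fun u => lo < u < hi))
    by exact (open_and _ _ (open_gt lo) (open_lt hi) q Hq).
  replace v with (RInt (fun t => Derive (fun u => F u t) q) a b).
  - apply (is_derive_RInt_param F a b q).
    + apply filter_imp with (2 := Hnear). intros u Hu t _. eexists. now apply Hd.
    + intros t _. apply continuity_2d_pt_ext_loc with dF; [|now apply Hc].
      destruct Hnear as [eps Heps]. exists eps. intros u w Hu _.
      symmetry. apply is_derive_unique, Hd, Heps, Hu.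
    + apply filter_imp with (2 := Hnear). exact Hi.
  - apply is_RInt_unique, is_RInt_ext with (dF q); [|exact Hv].
    intros t _. symmetry. now apply is_derive_unique, Hd.
Qed.

Lemma is_derive_ellE q : 0 < q < 1 -> is_derive ellE q ((ellE q - ellK q) / q).
Proof.
  intros Hq. unfold ellE at 1.
  apply (is_derive_RInt_param_interval (fun u t => sqrt (ell_delta u t))
           (fun u t => - (u * sin t ^ 2) / sqrt (ell_delta u t)) (-1) 1);
    [lra | intros; now apply is_derive_sqrt_ell_delta
    | intros; now apply continuity_2d_pt_derive_sqrt_ell_delta
    | intros; now apply ex_RInt_sqrt_ell_delta |].
  assert (Hpt : forall t, / q * sqrt (ell_delta q t) + - / q * / sqrt (ell_delta q t)
                         = - (q * sin t ^ 2) / sqrt (ell_delta q t)).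
  { intros t. pose proof (sqrt_ell_delta_pos q t ltac:(lra)) as HS.
    pose proof (sqrt_sqrt _ (Rlt_le _ _ (ell_delta_pos q t ltac:(lra)))) as HS2.
    set (S := sqrt (ell_delta q t)) in *. unfold ell_delta in HS2.
    replace (- (q * sin t ^ 2)) with ((S * S - 1) / q) by (rewrite HS2; field; lra).
    field. lra. }
  replace ((ellE q - ellK q) / q) with (/ q * ellE q + - / q * ellK q) by (field; lra).
  apply is_RInt_ext with (fun t => / q * sqrt (ell_delta q t) + - / q * / sqrt (ell_delta q t)).
  - intros t _. apply Hpt.
  - apply is_RInt_lincomb; [apply is_RInt_ellE | apply is_RInt_ellK]; lra.
Qed.

Definition ell_phi (q t : R) : R := sin t * cos t / sqrt (ell_delta q t).

Definition ell_phi' (q t : R) : R :=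
  ((cos t ^ 2 - sin t ^ 2) * ell_delta q t + q ^ 2 * sin t ^ 2 * cos t ^ 2)
    / (ell_delta q t * sqrt (ell_delta q t)).

Lemma is_derive_ell_phi q t : -1 < q < 1 -> is_derive (ell_phi q) t (ell_phi' q t).
Proof.
  intros Hq. pose proof (ell_delta_pos q t Hq). pose proof (sqrt_ell_delta_pos q t Hq).
  unfold ell_phi, ell_phi', ell_delta at 1. auto_derive; fold_ell_delta q t.
  - repeat split; [easy | now apply Rgt_not_eq].
  - rewrite sqrt_sqrt by lra. unfold ell_delta in *. field. split; [lra | nra].
Qed.

Lemma continuous_ell_phi' q t : -1 < q < 1 -> continuous (ell_phi' q) t.
Proof.
  intros Hq. apply (@ex_derive_continuous R_AbsRing R_NormedModule).
  pose proof (ell_delta_pos q t Hq). pose proof (sqrt_ell_delta_pos q t Hq).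
  unfold ell_phi', ell_delta. auto_derive.
  fold_ell_delta q t. repeat split; try lra. apply Rgt_not_eq, Rmult_lt_0_compat; lra.
Qed.

Lemma is_RInt_ell_phi' q : -1 < q < 1 -> is_RInt (ell_phi' q) 0 (PI / 2) 0.
Proof.
  intros Hq.
  assert (Hends : ell_phi q (PI / 2) = ell_phi q 0).
  { unfold ell_phi. rewrite cos_PI2, sin_0. unfold Rdiv. ring. }
  assert (HI : is_RInt (ell_phi' q) 0 (PI / 2) (minus (ell_phi q (PI / 2)) (ell_phi q 0))).
  { apply (is_RInt_derive (V := R_CompleteNormedModule)); intros t _.
    - now apply is_derive_ell_phi.
    - now apply continuous_ell_phi'. }
  rewrite Hends, minus_eq_zero in HI. exact HI.
Qed.

Lemma ellK_integrand_derive_decomp q s c S :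
  q <> 0 -> 1 - q ^ 2 <> 0 -> 0 < S -> S * S = 1 - q ^ 2 * s ^ 2 -> c ^ 2 + s ^ 2 = 1 ->
  q * s ^ 2 / ((1 - q ^ 2 * s ^ 2) * S)
  = / (q * (1 - q ^ 2)) * S + - / q * / S
    + - q / (1 - q ^ 2)
        * (((c ^ 2 - s ^ 2) * (1 - q ^ 2 * s ^ 2) + q ^ 2 * s ^ 2 * c ^ 2)
           / ((1 - q ^ 2 * s ^ 2) * S)).
Proof.
  intros Hq Hq2 HS HS2 Hcs.
  replace (/ (q * (1 - q ^ 2)) * S) with (/ (q * (1 - q ^ 2)) * (S * S) / S)
    by (field; lra).
  rewrite HS2. replace (c ^ 2) with (1 - s ^ 2) by lra.
  field. repeat split; try lra. nra.
Qed.

Lemma is_derive_ellK q : 0 < q < 1 ->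
  is_derive ellK q ((ellE q - (1 - q ^ 2) * ellK q) / (q * (1 - q ^ 2))).
Proof.
  intros Hq. unfold ellK at 1.
  apply (is_derive_RInt_param_interval (fun u t => / sqrt (ell_delta u t))
           (fun u t => u * sin t ^ 2 / (ell_delta u t * sqrt (ell_delta u t))) (-1) 1);
    [lra | intros; now apply is_derive_inv_sqrt_ell_delta
    | intros; now apply continuity_2d_pt_derive_inv_sqrt_ell_delta
    | intros; now apply ex_RInt_inv_sqrt_ell_delta |].
  assert (Hpt : forall t,
    / (q * (1 - q ^ 2)) * sqrt (ell_delta q t) + - / q * / sqrt (ell_delta q t)
      + - q / (1 - q ^ 2) * ell_phi' q t
    = q * sin t ^ 2 / (ell_delta q t * sqrt (ell_delta q t))).
  { intros t. symmetry. apply ellK_integrand_derive_decomp; try nra.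
    - apply sqrt_ell_delta_pos. lra.
    - apply sqrt_sqrt, Rlt_le, ell_delta_pos. lra.
    - pose proof (sin2_cos2 t) as Hsc. unfold Rsqr in Hsc. nra. }
  replace ((ellE q - (1 - q ^ 2) * ellK q) / (q * (1 - q ^ 2)))
    with (/ (q * (1 - q ^ 2)) * ellE q + - / q * ellK q + - q / (1 - q ^ 2) * 0)
    by (field; split; nra).
  assert (Hq1 : -1 < q < 1) by lra.
  apply is_RInt_ext with (2 := is_RInt_plus (V := R_NormedModule) _ _ _ _ _ _
    (is_RInt_lincomb _ _ _ _ _ _ _ _ (is_RInt_ellE q Hq1) (is_RInt_ellK q Hq1))
    (is_RInt_scal (V := R_NormedModule) _ _ _ _ _ (is_RInt_ell_phi' q Hq1))).
  intros t _. apply Hpt.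
Qed.

Definition gK' (q : R) : R := 16 / (q * (1 - q ^ 2)) * (2 * ellE q - ellK q) * fK q.

Lemma is_derive_gK q : 0 < q < 1 -> is_derive gK q (gK' q).
Proof.
  intros Hq. pose proof (is_derive_ellE q Hq) as HE. pose proof (is_derive_ellK q Hq) as HK.
  unfold gK, gK'. auto_derive.
  - repeat split; eexists; eassumption.
  - replace (Derive (fun x => ellE x) q) with ((ellE q - ellK q) / q)
      by (symmetry; now apply is_derive_unique).
    replace (Derive (fun x => ellK x) q)
      with ((ellE q - (1 - q ^ 2) * ellK q) / (q * (1 - q ^ 2)))
      by (symmetry; now apply is_derive_unique).
    unfold fK. field. split; nra.
Qed.

Lemma gK'_pos q : 0 < q < 1 -> 0 < (2 * ellE q - ellK q) * fK q -> 0 < gK' q.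
Proof.
  intros Hq Hpos. unfold gK'.
  assert (0 < 16 / (q * (1 - q ^ 2))) by (apply Rdiv_lt_0_compat; nra). nra.
Qed.

Lemma gK'_neg q : 0 < q < 1 -> (2 * ellE q - ellK q) * fK q < 0 -> gK' q < 0.
Proof.
  intros Hq Hneg. unfold gK'.
  assert (0 < 16 / (q * (1 - q ^ 2))) by (apply Rdiv_lt_0_compat; nra). nra.
Qed.

Lemma strict_incr_of_derive_pos (g g' : R -> R) x y : x < y ->
  (forall c, x <= c <= y -> is_derive g c (g' c)) ->
  (forall c, x < c < y -> 0 < g' c) -> g x < g y.
Proof.
  intros Hxy Hd Hpos.
  destruct (MVT_cor2 g g' x y Hxy) as [c [Hmvt Hc]].
  - intros c Hc. now apply is_derive_Reals, Hd.
  - pose proof (Hpos c Hc). nra.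
Qed.

Lemma strict_decr_of_derive_neg (g g' : R -> R) x y : x < y ->
  (forall c, x <= c <= y -> is_derive g c (g' c)) ->
  (forall c, x < c < y -> g' c < 0) -> g y < g x.
Proof.
  intros Hxy Hd Hneg.
  destruct (MVT_cor2 g g' x y Hxy) as [c [Hmvt Hc]].
  - intros c Hc. now apply is_derive_Reals, Hd.
  - pose proof (Hneg c Hc). nra.
Qed.

Lemma exists_near_left lo q d : lo < q -> 0 < d ->
  exists y, lo < y < q /\ Rabs (y - q) < d.
Proof.
  intros Hq Hd. exists (q - Rmin d (q - lo) / 2).
  pose proof (Rmin_l d (q - lo)). pose proof (Rmin_r d (q - lo)).
  assert (0 < Rmin d (q - lo)) by (apply Rmin_glb_lt; lra).
  split; [lra|]. apply Rabs_def1; lra.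
Qed.

Lemma exists_near_right q hi d : q < hi -> 0 < d ->
  exists y, q < y < hi /\ Rabs (y - q) < d.
Proof.
  intros Hq Hd. exists (q + Rmin d (hi - q) / 2).
  pose proof (Rmin_l d (hi - q)). pose proof (Rmin_r d (hi - q)).
  assert (0 < Rmin d (hi - q)) by (apply Rmin_glb_lt; lra).
  split; [lra|]. apply Rabs_def1; lra.
Qed.

Lemma near_in_interval lo q hi : lo < q < hi ->
  exists d, 0 < d /\ forall y, Rabs (y - q) < d -> lo < y < hi.
Proof.
  intros Hq. exists (Rmin (q - lo) (hi - q)). split; [apply Rmin_glb_lt; lra|].
  intros y Hy. apply Rabs_def2 in Hy.
  pose proof (Rmin_l (q - lo) (hi - q)). pose proof (Rmin_r (q - lo) (hi - q)). lra.
Qed.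

Lemma is_local_max_of_peak (D : R -> Prop) (g : R -> R) lo q hi :
  lo < q < hi -> D q ->
  (forall x, lo < x < q -> g x < g q) -> (forall x, q < x < hi -> g x < g q) ->
  is_local_max D g q.
Proof.
  intros Hq HDq Hleft Hright. split; [exact HDq|].
  destruct (near_in_interval lo q hi Hq) as [d [Hd Hnear]].
  exists d. split; [exact Hd|]. intros y _ Hy. specialize (Hnear y Hy).
  destruct (Rtotal_order y q) as [Hyq | [-> | Hyq]].
  - left. apply Hleft. lra.
  - lra.
  - left. apply Hright. lra.
Qed.

Lemma is_local_min_of_valley (D : R -> Prop) (g : R -> R) lo q hi :
  lo < q < hi -> D q ->
  (forall x, lo < x < q -> g q < g x) -> (forall x, q < x < hi -> g q < g x) ->
  is_local_min D g q.
Proof.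
  intros Hq HDq Hleft Hright. split; [exact HDq|].
  destruct (near_in_interval lo q hi Hq) as [d [Hd Hnear]].
  exists d. split; [exact Hd|]. intros y _ Hy. specialize (Hnear y Hy).
  destruct (Rtotal_order y q) as [Hyq | [-> | Hyq]].
  - left. apply Hleft. lra.
  - lra.
  - left. apply Hright. lra.
Qed.

Lemma no_local_extremum_of_strictly_monotone (D : R -> Prop) (g : R -> R) lo q hi :
  lo < q < hi -> (forall y, lo < y < hi -> D y) ->
  strictly_monotone_on (fun x => lo < x < hi) g ->
  ~ (is_local_max D g q \/ is_local_min D g q).
Proof.
  intros Hq HD Hmono.
  assert (Hsides : forall d, 0 < d -> exists y0 y1,
            lo < y0 < q /\ q < y1 < hi /\ Rabs (y0 - q) < d /\ Rabs (y1 - q) < d).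
  { intros d Hd.
    destruct (exists_near_left lo q d ltac:(lra) Hd) as [y0 [H0 H0d]].
    destruct (exists_near_right q hi d ltac:(lra) Hd) as [y1 [H1 H1d]].
    now exists y0, y1. }
  intros [[_ [d [Hd Hext]]] | [_ [d [Hd Hext]]]];
    destruct (Hsides d Hd) as [y0 [y1 [H0 [H1 [H0d H1d]]]]];
    pose proof (Hext y0 (HD y0 ltac:(lra)) H0d);
    pose proof (Hext y1 (HD y1 ltac:(lra)) H1d);
    destruct Hmono as [Hinc | Hdec].
  - pose proof (Hinc q y1 ltac:(lra) ltac:(lra) ltac:(lra)). lra.
  - pose proof (Hdec y0 q ltac:(lra) ltac:(lra) ltac:(lra)). lra.
  - pose proof (Hinc y0 q ltac:(lra) ltac:(lra) ltac:(lra)). lra.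
  - pose proof (Hdec q y1 ltac:(lra) ltac:(lra) ltac:(lra)). lra.
Qed.

Section UpDownUp.

Variables (g g' : R -> R) (a p r b : R).
Hypothesis Hap : a < p.
Hypothesis Hpr : p < r.
Hypothesis Hrb : r < b.
Hypothesis Hderiv : forall x, a < x < b -> is_derive g x (g' x).
Hypothesis Hup_left : forall x, a < x < p -> 0 < g' x.
Hypothesis Hdown : forall x, p < x < r -> g' x < 0.
Hypothesis Hup_right : forall x, r < x < b -> 0 < g' x.

Lemma up_down_up_incr_left x y : a < x -> x < y -> y <= p -> g x < g y.
Proof.
  intros Hx Hxy Hy. apply (strict_incr_of_derive_pos g g'); [exact Hxy | |].
  - intros c Hc. apply Hderiv. lra.
  - intros c Hc. apply Hup_left. lra.
Qed.

Lemma up_down_up_decr_mid x y : p <= x -> x < y -> y <= r -> g y < g x.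
Proof.
  intros Hx Hxy Hy. apply (strict_decr_of_derive_neg g g'); [exact Hxy | |].
  - intros c Hc. apply Hderiv. lra.
  - intros c Hc. apply Hdown. lra.
Qed.

Lemma up_down_up_incr_right x y : r <= x -> x < y -> y < b -> g x < g y.
Proof.
  intros Hx Hxy Hy. apply (strict_incr_of_derive_pos g g'); [exact Hxy | |].
  - intros c Hc. apply Hderiv. lra.
  - intros c Hc. apply Hup_right. lra.
Qed.

Lemma up_down_up_local_max : is_local_max (fun x => a < x < b) g p.
Proof.
  apply (is_local_max_of_peak _ _ a p r); [lra | lra | |]; intros x Hx.
  - apply up_down_up_incr_left; lra.
  - apply up_down_up_decr_mid; lra.
Qed.

Lemma up_down_up_local_min : is_local_min (fun x => a < x < b) g r.
Proof.
  apply (is_local_min_of_valley _ _ p r b); [lra | lra | |]; intros x Hx.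
  - apply up_down_up_decr_mid; lra.
  - apply up_down_up_incr_right; lra.
Qed.

Lemma up_down_up_local_extrema q :
  is_local_max (fun x => a < x < b) g q \/ is_local_min (fun x => a < x < b) g q
  <-> q = p \/ q = r.
Proof.
  split.
  - intros Hext. assert (Hq : a < q < b) by (destruct Hext as [[Hq _] | [Hq _]]; exact Hq).
    destruct (Rtotal_order q p) as [Hqp | [-> | Hqp]]; [exfalso | now left |].
    { apply (no_local_extremum_of_strictly_monotone (fun x => a < x < b) g a q p);
        [lra | intros; lra | | exact Hext].
      left. intros x y Hx Hy Hxy. apply up_down_up_incr_left; lra. }
    destruct (Rtotal_order q r) as [Hqr | [-> | Hqr]]; [exfalso | now right | exfalso].
    + apply (no_local_extremum_of_strictly_monotone (fun x => a < x < b) g p q r);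
        [lra | intros; lra | | exact Hext].
      right. intros x y Hx Hy Hxy. apply up_down_up_decr_mid; lra.
    + apply (no_local_extremum_of_strictly_monotone (fun x => a < x < b) g r q b);
        [lra | intros; lra | | exact Hext].
      left. intros x y Hx Hy Hxy. apply up_down_up_incr_right; lra.
  - intros [-> | ->].
    + left. exact up_down_up_local_max.
    + right. exact up_down_up_local_min.
Qed.

Lemma up_down_up_local_max_unique q : is_local_max (fun x => a < x < b) g q -> q = p.
Proof.
  intros Hmax. destruct (proj1 (up_down_up_local_extrema q) (or_introl Hmax)) as [-> | ->];
    [reflexivity | exfalso].
  destruct Hmax as [_ [d [Hd Hle]]].
  destruct (exists_near_right r b d Hrb Hd) as [y [Hy Hyd]].
  pose proof (Hle y ltac:(lra) Hyd).
  pose proof (up_down_up_incr_right r y ltac:(lra) ltac:(lra) ltac:(lra)). lra.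
Qed.

Lemma up_down_up_shape :
  (forall q, is_local_max (fun x => a < x < b) g q \/ is_local_min (fun x => a < x < b) g q
             <-> q = p \/ q = r) /\
  is_local_max (fun x => a < x < b) g p /\
  (forall q, is_local_max (fun x => a < x < b) g q -> q = p) /\
  is_local_min (fun x => a < x < b) g r /\
  strictly_monotone_on (fun x => a < x <= p) g /\
  strictly_monotone_on (fun x => p <= x <= r) g /\
  strictly_monotone_on (fun x => r <= x < b) g.
Proof.
  split; [exact up_down_up_local_extrema|].
  split; [exact up_down_up_local_max|].
  split; [exact up_down_up_local_max_unique|].
  split; [exact up_down_up_local_min|].
  split; [left; intros x y Hx Hy Hxy; apply up_down_up_incr_left; lra|].
  split; [right; intros x y Hx Hy Hxy; apply up_down_up_decr_mid; lra|].
  left; intros x y Hx Hy Hxy; apply up_down_up_incr_right; lra.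
Qed.

End UpDownUp.

Theorem lemma2p4 (qs qh : R)
  (* context: q -> 2E(q)-K(q) strictly decreasing on [0,1), q_star its zero in (0,1) *)
  (Hdec : forall x y, 0 <= x -> x < y -> y < 1 ->
            2 * ellE y - ellK y < 2 * ellE x - ellK x)
  (Hqs : 0 < qs < 1) (Hqs0 : 2 * ellE qs - ellK qs = 0)
  (* context: qhat is the zero of f in [1/sqrt 2,1), lies in (1/sqrt 2, q_star),
     f > 0 on [1/sqrt 2, qhat), f < 0 on (qhat, 1) *)
  (Hqh : / sqrt 2 < qh < qs) (Hqh0 : fK qh = 0)
  (Hfpos : forall x, / sqrt 2 <= x < qh -> 0 < fK x)
  (Hfneg : forall x, qh < x < 1 -> fK x < 0) :
  (forall q, / sqrt 2 < q < 1 ->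
     is_derive gK q (16 / (q * (1 - q ^ 2)) * (2 * ellE q - ellK q) * fK q)) /\
  (forall q, (is_local_max domg gK q \/ is_local_min domg gK q) <->
             (q = qh \/ q = qs)) /\
  is_local_max domg gK qh /\
  (forall q, is_local_max domg gK q -> q = qh) /\
  gK qs = 0 /\ is_local_min domg gK qs /\
  strictly_monotone_on (fun x => / sqrt 2 < x <= qh) gK /\
  strictly_monotone_on (fun x => qh <= x <= qs) gK /\
  strictly_monotone_on (fun x => qs <= x < 1) gK.
Proof.
  assert (Hsqrt2 : 0 < / sqrt 2) by (apply Rinv_0_lt_compat, sqrt_lt_R0; lra).
  assert (Hh_pos : forall x, 0 <= x < qs -> 0 < 2 * ellE x - ellK x)
    by (intros x Hx; rewrite <- Hqs0; apply Hdec; lra).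
  assert (Hh_neg : forall x, qs < x < 1 -> 2 * ellE x - ellK x < 0)
    by (intros x Hx; rewrite <- Hqs0; apply Hdec; lra).
  assert (Hderiv : forall q, / sqrt 2 < q < 1 -> is_derive gK q (gK' q))
    by (intros q Hq; apply is_derive_gK; lra).
  assert (Hup_left : forall x, / sqrt 2 < x < qh -> 0 < gK' x).
  { intros x Hx. apply gK'_pos; [lra|].
    pose proof (Hh_pos x ltac:(lra)). pose proof (Hfpos x ltac:(lra)). nra. }
  assert (Hdown : forall x, qh < x < qs -> gK' x < 0).
  { intros x Hx. apply gK'_neg; [lra|].
    pose proof (Hh_pos x ltac:(lra)). pose proof (Hfneg x ltac:(lra)). nra. }
  assert (Hup_right : forall x, qs < x < 1 -> 0 < gK' x).
  { intros x Hx. apply gK'_pos; [lra|].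
    pose proof (Hh_neg x ltac:(lra)). pose proof (Hfneg x ltac:(lra)). nra. }
  destruct (up_down_up_shape gK gK' (/ sqrt 2) qh qs 1
              ltac:(lra) ltac:(lra) ltac:(lra) Hderiv Hup_left Hdown Hup_right)
    as (Hextrema & Hmax & Hmax_unique & Hmin & Hmono_left & Hmono_mid & Hmono_right).
  assert (Hg_qs : gK qs = 0) by (unfold gK; rewrite Hqs0; ring).
  exact (conj Hderiv (conj Hextrema (conj Hmax (conj Hmax_unique (conj Hg_qs
          (conj Hmin (conj Hmono_left (conj Hmono_mid Hmono_right)))))))).
Qed.
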